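(* For all $A\in\mathrm{M}_2(E_0)$ and $B\in\mathrm{M}_2(E_1)$, \[\Big\{\tfrac12\mathrm{tr}(B)\mathrm{tr}(A)+\tfrac12\mathrm{tr}(A)\mathrm{tr}(B)-\tfrac12\mathrm{tr}(AB)-\tfrac12\mathrm{tr}(BA)\Big\}I_2-\mathrm{tr}(B)A-\mathrm{tr}(A)B+AB+BA=0.\]
   Context: $K$ is a field of characteristic zero. $E$ is the infinite-dimensional Grassmann (exterior) algebra over $K$, generated by countably many indeterminates $v_1,v_2,\dots$ subject to $v_iv_j+v_jv_i=0$ for all $i,j$. $E=E_0\oplus E_1$ is its natural $\mathbb{Z}_2$-grading: $E_0$ (resp. $E_1$) is the $K$-span of products of an even (resp. odd) number of generators; $E_0$ is commutative and central in $E$. $\mathrm{M}_n(R)$ denotes the $n\times n$ matrices over $R$, $I_2$ the $2\times2$ identity matrix, and $\mathrm{tr}$ the sum of diagonal entries. *)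

From HB Require Import structures.
From mathcomp Require Import all_boot all_order all_algebra.
From mathcomp Require Import finmap.
Set Implicit Arguments. Unset Strict Implicit. Unset Printing Implicit Defensive.
Import Order.TTheory GRing.Theory Num.Theory.
Local Open Scope fset_scope.
Local Open Scope ring_scope.

(* Generators are v_i, i : nat (indexed from 0 instead of 1: a relabeling).
   A basis monomial is v_{s_1} v_{s_2} ... v_{s_k} with s_1 < ... < s_k,
   encoded by the finite set S = {s_1,...,s_k}; the empty set is 1.
   An element of E is its coefficient function {fset nat} -> K, required to
   have finite support (predicate [grass_elt]). *)
Definition grass (K : fieldType) := {fset nat} -> K.

Section Grass.
Variable K : fieldType.

Definition gzero : grass K := fun _ => 0.
Definition gadd (f g : grass K) : grass K := fun S => f S + g S.
Definition gopp (f : grass K) : grass K := fun S => - f S.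
Definition gscale (c : K) (f : grass K) : grass K := fun S => c * f S.

(* number of inversions (t,u), t in T, u in U, t > u: sign of v_T v_U = ± v_(T ∪ U) *)
Definition ninv (T U : {fset nat}) : nat :=
  (\sum_(t <- enum_fset T) \sum_(u <- enum_fset U) (u < t))%N.

Definition gmul (f g : grass K) : grass K := fun S =>
  \sum_(T <- enum_fset (fpowerset S))
     (-1) ^+ ninv T (S `\` T) * (f T * g (S `\` T)).

Definition grass_elt (f : grass K) : Prop :=
  exists s : seq {fset nat}, forall S, f S != 0 -> S \in s.

(* E_0 : span of even monomials; E_1 : span of odd monomials *)
Definition grass_even (f : grass K) : Prop :=
  grass_elt f /\ forall S, odd #|` S| -> f S = 0.
Definition grass_odd (f : grass K) : Prop :=
  grass_elt f /\ forall S, ~~ odd #|` S| -> f S = 0.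

Definition gmat := 'M[grass K]_2.

Definition i0 : 'I_2 := ord0.
Definition i1 : 'I_2 := ord_max.

Definition gmat_add (A B : gmat) : gmat := \matrix_(i, j) gadd (A i j) (B i j).
Definition gmat_opp (A : gmat) : gmat := \matrix_(i, j) gopp (A i j).
Definition gmat_mul (A B : gmat) : gmat :=
  \matrix_(i, j) gadd (gmul (A i i0) (B i0 j)) (gmul (A i i1) (B i1 j)).
Definition gmat_lscale (e : grass K) (A : gmat) : gmat :=
  \matrix_(i, j) gmul e (A i j).
Definition gscalar_mx (e : grass K) : gmat :=
  \matrix_(i, j) if i == j then e else gzero.
Definition gtr (A : gmat) : grass K := gadd (A i0 i0) (A i1 i1).

End Grass.

From HB Require Import structures.
From mathcomp Require Import all_boot all_order all_algebra.
From mathcomp Require Import finmap.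
From mathcomp Require Import ring.
From Stdlib Require Import FunctionalExtensionality.
Import GRing.Theory.
Local Open Scope ring_scope.
Local Open Scope fset_scope.
Set Implicit Arguments.
Unset Strict Implicit.

(* The identity is the polarized Cayley-Hamilton identity for 2x2 matrices,
   which holds as soon as the entries of A commute with every element of E.
   The proof therefore has two parts.

   1. Even elements of E are central.  The coefficient of v_S in b*a is a
      sum over splittings S = T ⊔ (S\T); reindexing by T |-> S\T turns it
      into the sum defining a*b, up to the signs (-1)^ninv(U,T) versus
      (-1)^ninv(T,U).  Since ninv T U + ninv U T = |T|*|U| for disjoint T,U,
      these signs agree whenever |T| is even, i.e. whenever a T can be
      nonzero.
   2. Using bilinearity of the product and centrality of the entries of A,
      every entry of the left-hand side, evaluated at a monomial S, becomes
      an expression in finitely many elements of the field K in which the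
      products involving B keep their order; it vanishes by a commutative
      field computation (using 2 != 0 in characteristic zero). *)

Section GrassmannProduct.
Variable K : fieldType.

Lemma gmulDl (f g h : grass K) : gmul (gadd f g) h = gadd (gmul f h) (gmul g h).
Proof.
apply: functional_extensionality => S; rewrite /gmul /gadd -big_split /=.
by apply: eq_bigr => T _; rewrite !mulrDl mulrDr.
Qed.

Lemma gmulDr (f g h : grass K) : gmul h (gadd f g) = gadd (gmul h f) (gmul h g).
Proof.
apply: functional_extensionality => S; rewrite /gmul /gadd -big_split /=.
by apply: eq_bigr => T _; rewrite !mulrDr.
Qed.

(* Between disjoint sets T and U, each of the |T|*|U| pairs (t,u) is an
   inversion of exactly one of the orderings (T,U) and (U,T). *)
Lemma ninv_sum (T U : {fset nat}) : [disjoint T & U] ->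
  (ninv T U + ninv U T = #|` T| * #|` U|)%N.
Proof.
move=> dTU.
have -> : ninv U T = (\sum_(t <- enum_fset T) \sum_(u <- enum_fset U) (t < u))%N.
  by rewrite /ninv exchange_big.
rewrite /ninv -big_split /= -(sum1_size (enum_fset T)) big_distrl /=.
rewrite big_seq [RHS]big_seq; apply: eq_bigr => t tT.
rewrite -big_split /= -(sum1_size (enum_fset U)) big_distrr /= muln1.
rewrite big_seq [RHS]big_seq; apply: eq_bigr => u uU.
have neq_tu : t != u.
  by apply/eqP => etu; move/fdisjointP: dTU => /(_ t tT); rewrite etu uU.
by case: (ltngtP u t) neq_tu => // ->.
Qed.

Lemma sign_ninv_swap (T U : {fset nat}) : [disjoint T & U] -> ~~ odd #|` T| ->
  (-1) ^+ ninv U T = (-1) ^+ ninv T U :> K.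
Proof.
move=> dTU evenT; rewrite -signr_odd -[RHS]signr_odd.
have := ninv_sum dTU; move/(congr1 odd); rewrite oddD oddM (negbTE evenT) /=.
by case: (odd (ninv T U)); case: (odd (ninv U T)).
Qed.

Lemma sum_fpowerset_compl (S : {fset nat}) (F : {fset nat} -> K) :
  \sum_(T <- enum_fset (fpowerset S)) F T =
  \sum_(T <- enum_fset (fpowerset S)) F (S `\` T).
Proof.
rewrite -(big_map (fun T => S `\` T) xpredT).
apply: perm_big; apply: uniq_perm; first exact: fset_uniq.
- rewrite map_inj_in_uniq ?fset_uniq // => T T' HT HT' eqD.
  by rewrite -(fsetDK (A:=S) (B:=T)) -?fpowersetE // eqD fsetDK -?fpowersetE.
move=> X; apply/idP/mapP.
- move=> HX; exists (S `\` X); first by rewrite fpowersetE fsubsetDl.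
  by rewrite fsetDK -?fpowersetE.
- by case=> Y _ ->; rewrite fpowersetE fsubsetDl.
Qed.

Lemma gmulC_even (a b : grass K) :
  (forall S, odd #|` S| -> a S = 0) -> gmul b a = gmul a b.
Proof.
move=> a_even; apply: functional_extensionality => S.
rewrite /gmul sum_fpowerset_compl big_seq [RHS]big_seq.
apply: eq_bigr => T HT; have subTS : T `<=` S by rewrite -fpowersetE.
rewrite fsetDK //; have [oddT | evenT] := boolP (odd #|` T|).
  by rewrite a_even // !mulr0 mul0r mulr0.
have dT : [disjoint T & S `\` T] by apply/fdisjointP => x xT; rewrite in_fsetD xT.
by rewrite sign_ninv_swap // [b _ * _]mulrC.
Qed.

End GrassmannProduct.

Lemma ord2_cases (i : 'I_2) : i = i0 \/ i = i1.
Proof. by case: i => [[|[|//]]] Hi; [left | right]; apply: val_inj. Qed.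

Theorem corollary2p2 (K : fieldType) (charK0 : [pchar K] =i pred0)
  (A B : gmat K)
  (hA : forall i j, grass_even (A i j))
  (hB : forall i j, grass_odd (B i j)) :
  let h := (2 : K)^-1 in
  gmat_add
    (gmat_add
      (gmat_add
        (gmat_add
          (gscalar_mx
            (gadd (gadd (gscale h (gmul (gtr B) (gtr A)))
                        (gscale h (gmul (gtr A) (gtr B))))
                  (gopp (gadd (gscale h (gtr (gmat_mul A B)))
                              (gscale h (gtr (gmat_mul B A)))))))
          (gmat_opp (gmat_lscale (gtr B) A)))
        (gmat_opp (gmat_lscale (gtr A) B)))
      (gmat_mul A B))
    (gmat_mul B A)
  = \matrix_(i, j) gzero K.
Proof.
move=> h; have two_neq0 : (2 : K) != 0 by move/pcharf0P: charK0 => ->.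
apply/matrixP => i j; rewrite !mxE /gtr !mxE.
(* expand all products and move the (central) entries of A to the left *)
rewrite !(gmulDl, gmulDr) !(gmulC_even _ (hA _ _).2).
apply: functional_extensionality => S.
have [-> | ->] := ord2_cases i; have [-> | ->] := ord2_cases j.
all: rewrite /gadd /gopp /gscale /gzero /= /h; by field.
Qed.
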